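(* Let $M$ be a monoid with identity $1$, and let $R_1=\{f\in M: fM=M\}$ be the $\mathcal{R}$-class of $1$ (the set of elements having a right inverse). If $M-R_1\neq\emptyset$ and $R_1\neq\{1\}$, then $\sigma_m(M)=\sigma_m^*(M)=\sigma_s(M)=2$.
   Context: A subsemigroup is a nonempty subset closed under the operation. For a monoid $M$: a submonoid is a subsemigroup containing the identity of $M$; a monoidal subsemigroup is a subsemigroup that is a monoid in its own right (its identity need not be that of $M$). $\sigma_s(M)$, $\sigma_m(M)$, $\sigma_m^*(M)$ denote the least positive integer $n$ such that $M$ is the union of $n$ proper subsemigroups, proper submonoids, respectively proper monoidal subsemigroups, or $\infty$ if no such finite $n$ exists. *)

From Stdlib Require Import Arith.

Section MonoidDefs.
Variables (T : Type) (mul : T -> T -> T) (one : T).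

Definition is_subsemigroup (S : T -> Prop) : Prop :=
  (exists x, S x) /\ (forall x y, S x -> S y -> S (mul x y)).

Definition is_submonoid (S : T -> Prop) : Prop :=
  is_subsemigroup S /\ S one.

Definition is_monoidal_subsemigroup (S : T -> Prop) : Prop :=
  is_subsemigroup S /\
  exists e, S e /\ (forall x, S x -> mul e x = x /\ mul x e = x).

Definition proper_subset (S : T -> Prop) : Prop := exists x, ~ S x.

Definition covered_by (P : (T -> Prop) -> Prop) (n : nat) : Prop :=
  exists F : nat -> T -> Prop,
    (forall i, i < n -> P (F i) /\ proper_subset (F i)) /\
    (forall x, exists i, i < n /\ F i x).

Definition sigma_eq (P : (T -> Prop) -> Prop) (n : nat) : Prop :=
  0 < n /\ covered_by P n /\ (forall m, 0 < m -> covered_by P m -> n <= m).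

Definition R1 (f : T) : Prop := forall g, exists h, mul f h = g.

End MonoidDefs.

(* R_1 is a proper submonoid (it misses M - R_1), and so is (M - R_1) ∪ {1}: if
   x y lies in R_1 then so does x, hence M - R_1 absorbs right multiplication.
   These two submonoids cover M, and as 1 ≠ f ∈ R_1 the second one is proper.
   A submonoid is both a monoidal subsemigroup and a subsemigroup, so all three
   covering numbers are at most 2, and no nonempty set is covered by a single
   proper subset. *)
From Stdlib Require Import Arith Lia Classical_Prop.

Lemma not_covered_by_1 (T : Type) (P : (T -> Prop) -> Prop) : ~ covered_by T P 1.
Proof.
  intros [F [HF Hcover]].
  destruct (HF 0 ltac:(lia)) as [_ [x Hx]].
  destruct (Hcover x) as [i [Hi Hix]].
  replace i with 0 in Hix by lia.
  exact (Hx Hix).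
Qed.

Lemma covered_by_2 (T : Type) (P : (T -> Prop) -> Prop) (A B : T -> Prop) :
  P A -> P B -> proper_subset T A -> proper_subset T B ->
  (forall x, A x \/ B x) -> covered_by T P 2.
Proof.
  intros PA PB nA nB AB.
  exists (fun i => if Nat.eqb i 0 then A else B). split.
  - intros [|i] _; simpl; auto.
  - intros x. destruct (AB x); [exists 0 | exists 1]; simpl; split; auto; lia.
Qed.

Lemma sigma_eq_2 (T : Type) (P : (T -> Prop) -> Prop) (A B : T -> Prop) :
  P A -> P B -> proper_subset T A -> proper_subset T B ->
  (forall x, A x \/ B x) -> sigma_eq T P 2.
Proof.
  intros PA PB nA nB AB. split; [lia | split].
  - exact (covered_by_2 T P A B PA PB nA nB AB).
  - intros [|[|m]] Hm Hcov; try lia.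
    exfalso. exact (not_covered_by_1 T P Hcov).
Qed.

Section Monoid.
Variables (T : Type) (mul : T -> T -> T) (one : T).
Hypothesis mulA : forall x y z, mul x (mul y z) = mul (mul x y) z.
Hypothesis mul1x : forall x, mul one x = x.
Hypothesis mulx1 : forall x, mul x one = x.

Lemma submonoid_monoidal (S : T -> Prop) :
  is_submonoid T mul one S -> is_monoidal_subsemigroup T mul S.
Proof.
  intros [HS S1]. split; [exact HS |].
  exists one. split; [exact S1 |]. intros x _. auto.
Qed.

Lemma submonoid_subsemigroup (S : T -> Prop) :
  is_submonoid T mul one S -> is_subsemigroup T mul S.
Proof. intros [HS _]. exact HS. Qed.

Lemma R1_one : R1 T mul one.
Proof. intros g. exists g. apply mul1x. Qed.

Lemma R1_mul x y : R1 T mul x -> R1 T mul y -> R1 T mul (mul x y).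
Proof.
  intros Rx Ry g.
  destruct (Rx g) as [u Hu]. destruct (Ry u) as [v Hv].
  exists v. rewrite <- mulA, Hv. exact Hu.
Qed.

Lemma R1_mul_l x y : R1 T mul (mul x y) -> R1 T mul x.
Proof.
  intros Rxy g. destruct (Rxy g) as [h Hh].
  exists (mul y h). rewrite mulA. exact Hh.
Qed.

Lemma R1_submonoid : is_submonoid T mul one (R1 T mul).
Proof.
  split; [split |].
  - exists one. exact R1_one.
  - exact R1_mul.
  - exact R1_one.
Qed.

Definition nonR1_with_one (x : T) : Prop := ~ R1 T mul x \/ x = one.

Lemma nonR1_with_one_submonoid : is_submonoid T mul one nonR1_with_one.
Proof.
  split; [split |].
  - exists one. now right.
  - intros x y [nRx | ->] Hy.
    + left. intros Rxy. exact (nRx (R1_mul_l x y Rxy)).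
    + now rewrite mul1x.
  - now right.
Qed.

End Monoid.

Theorem mainTheorem18 (T : Type) (mul : T -> T -> T) (one : T)
  (mulA : forall x y z, mul x (mul y z) = mul (mul x y) z)
  (mul1x : forall x, mul one x = x)
  (mulx1 : forall x, mul x one = x)
  (hnotR1 : exists x, ~ R1 T mul x)
  (hR1big : exists f, R1 T mul f /\ f <> one) :
  sigma_eq T (is_submonoid T mul one) 2 /\
  sigma_eq T (is_monoidal_subsemigroup T mul) 2 /\
  sigma_eq T (is_subsemigroup T mul) 2.
Proof.
  set (A := R1 T mul). set (B := nonR1_with_one T mul one).
  assert (SA : is_submonoid T mul one A) by exact (R1_submonoid T mul one mulA mul1x).
  assert (SB : is_submonoid T mul one B)
    by exact (nonR1_with_one_submonoid T mul one mulA mul1x).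
  pose proof (submonoid_monoidal T mul one mul1x mulx1) as monoidal.
  assert (nB : proper_subset T B).
  { destruct hR1big as [f [Rf f1]]. exists f. now intros [nRf | ->]. }
  assert (AB : forall x, A x \/ B x).
  { intros x. destruct (classic (A x)); [left | right; left]; assumption. }
  split; [| split];
    [ apply (sigma_eq_2 T _ A B SA SB)
    | apply (sigma_eq_2 T _ A B (monoidal A SA) (monoidal B SB))
    | apply (sigma_eq_2 T _ A B (submonoid_subsemigroup _ _ _ _ SA)
                                (submonoid_subsemigroup _ _ _ _ SB)) ];
    assumption.
Qed.
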